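(* Let $k$ be admissible. Let $R=\mathrm{ad}(U(\mathfrak g))Q$ and $R^T=\mathrm{ad}(U(\mathfrak g))Q^T$. Let $u_1\ne0$ be an element of the zero-weight subspace $R_0$ of $R$, and $u_2\ne0$ an element of the zero-weight subspace $R^T_0$ of $R^T$. Let $p_1,p_2\in\mathbb C[h]$ be the unique polynomials with $$u_1\equiv p_1(h)\mod U(\mathfrak g)\mathfrak n_+,\qquad u_2\equiv p_2(h)\mod U(\mathfrak g)\mathfrak n_-.$$ Then for $\mu\in\mathfrak h^*$ the following are equivalent: (1) the irreducible highest weight $\mathfrak g$-module $V(\mu)$ is an $A(L(k,0))$-module; (2) $p_1(\mu)=0$; (3) $p_2(-\mu)=0$. Here $p(\mu)$ denotes $p$ evaluated at $h=\mu(h)$.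
   Context: $\mathfrak g=sl(2,\mathbb C)$ has basis $e,f,h$ with the usual relations, $\mathfrak h=\mathbb Ch$, $\mathfrak n_+=\mathbb Ce$, $\mathfrak n_-=\mathbb Cf$. The adjoint action is $\mathrm{ad}(x)u=xu-ux$. $x\mapsto x^T$ is the anti-automorphism of $U(\mathfrak g)$ with $x^T=-x$ for $x\in\mathfrak g$. $k=p/q$ is admissible: $q\in\mathbb N$, $p\in\mathbb Z$, $\gcd(p,q)=1$, $2q+p-2\ge0$. $L(k,0)$ is the simple quotient VOA of the level-$k$ vacuum $\hat{\mathfrak g}$-module $M(k,0)$, by the ideal generated by its singular vector $v_{sing}$. $Q=F([v_{sing}])\in U(\mathfrak g)$, where $F:A(M(k,0))\to U(\mathfrak g)$ is the isomorphism of Zhu's algebra given by $F[a_1(-i_1-1)\cdots a_n(-i_n-1)\mathbf 1]=(-1)^{i_1+\cdots+i_n}a_n\cdots a_1$. Then $A(L(k,0))\cong U(\mathfrak g)/\langle Q\rangle$, and a $\mathfrak g$-module is an $A(L(k,0))$-module iff it is annihilated by $Q$. $R$ and $R^T$ are irreducible $\mathfrak g$-modules isomorphic to $V(2N\omega)$, where $N=2q+p-1$ and $\omega$ is the fundamental weight ($\omega(h)=1$). Hence $R_0$ and $R^T_0$ are one-dimensional. *)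

From HB Require Import structures.
From mathcomp Require Import all_boot all_order all_algebra.
Set Implicit Arguments. Unset Strict Implicit. Unset Printing Implicit Defensive.
Import Order.TTheory GRing.Theory Num.Theory.
Local Open Scope ring_scope.

Section Sl2.
Variables (C : numClosedFieldType) (U : algType C).

Definition lie (x y : U) : U := x * y - y * x.

Definition sl2_relations (e f h : U) : Prop :=
  [/\ lie h e = e *+ 2, lie h f = - (f *+ 2) & lie e f = h].

Definition pbw_mono (e f h : U) (a b c : nat) : U := f ^+ a * h ^+ b * e ^+ c.

Definition pbw_rep (e f h : U) (coef : nat -> nat -> nat -> C) (u : U) : Prop :=
  exists n : nat,
    (forall a b c, [|| (n <= a)%N, (n <= b)%N | (n <= c)%N] -> coef a b c = 0) /\
    u = \sum_(a < n) \sum_(b < n) \sum_(c < n) coef a b c *: pbw_mono e f h a b c.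

Definition PBW_basis (e f h : U) : Prop :=
  forall u, (exists coef, pbw_rep e f h coef u) /\
    forall c1 c2, pbw_rep e f h c1 u -> pbw_rep e f h c2 u ->
      forall a b c, c1 a b c = c2 a b c.

Definition is_U_sl2 (e f h : U) : Prop := sl2_relations e f h /\ PBW_basis e f h.

Definition is_transpose (e f h : U) (T : U -> U) : Prop :=
  [/\ forall (a : C) x y, T (a *: x + y) = a *: T x + T y,
      forall x y, T (x * y) = T y * T x,
      T 1 = 1 &
      [/\ T e = - e, T f = - f & T h = - h]].

Definition sl2_gen (e f h : U) (i : 'I_3) : U :=
  if val i == 0%N then e else if val i == 1%N then f else h.

Definition adw (w : seq U) (u : U) : U := foldr lie u w.

(* R = ad(U(g)) Q : span of all iterated adjoint actions of e, f, h on Q *)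
Definition ad_span (e f h : U) (Q : U) (u : U) : Prop :=
  exists s : seq (C * seq 'I_3),
    u = \sum_(p <- s) p.1 *: adw (map (sl2_gen e f h) p.2) Q.

Definition zero_weight (h u : U) : Prop := lie h u = 0.

Definition ad_stable (e f h : U) (S : U -> Prop) : Prop :=
  [/\ S 0, forall (a : C) x y, S x -> S y -> S (a *: x + y) &
      forall x, S x -> [/\ S (lie e x), S (lie f x) & S (lie h x)]].

(* R (an ad-submodule of U) is irreducible and isomorphic to V(n omega) *)
Definition ad_iso_V (e f h : U) (R : U -> Prop) (n : nat) : Prop :=
  [/\ exists x, R x /\ x != 0,
      forall S, ad_stable e f h S -> (forall x, S x -> R x) ->
        (forall x, S x -> x = 0) \/ (forall x, R x -> S x) &
      exists w, [/\ R w, w != 0, lie e w = 0 & lie h w = n%:R *: w]].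

Definition peval (p : {poly C}) (x : U) : U := \sum_(i < size p) p`_i *: x ^+ i.

Definition is_Umodule (M : lmodType C) (act : U -> M -> M) : Prop :=
  [/\ forall x (a : C) v w, act x (a *: v + w) = a *: act x v + act x w,
      forall (a : C) x y v, act (a *: x + y) v = a *: act x v + act y v,
      forall v, act 1 v = v &
      forall x y v, act (x * y) v = act x (act y v)].

Definition is_submodule (M : lmodType C) (act : U -> M -> M) (S : M -> Prop) : Prop :=
  [/\ S 0, forall (a : C) v w, S v -> S w -> S (a *: v + w) &
      forall x v, S v -> S (act x v)].

Definition irreducible_module (M : lmodType C) (act : U -> M -> M) : Prop :=
  (exists v : M, v != 0) /\
  forall S, is_submodule act S -> (forall v, S v -> v = 0) \/ (forall v, S v).

Definition hw_vector (e h : U) (M : lmodType C) (act : U -> M -> M) (v : M) (m : C) : Prop :=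
  [/\ v != 0, act e v = 0 & act h v = m *: v].

(* the irreducible highest weight module V(mu), mu(h) = m, is annihilated by Q,
   i.e. (by A(L(k,0)) = U(g)/<Q>) it is an A(L(k,0))-module *)
Definition Vmu_annihilated_by (e h : U) (Q : U) (m : C) : Prop :=
  forall (M : lmodType C) (act : U -> M -> M),
    is_Umodule act -> irreducible_module act ->
    (exists v, hw_vector e h act v m) ->
    forall v, act Q v = 0.

End Sl2.

(* admissible level k = p/q *)
Definition admissible (p : int) (q : nat) : bool :=
  [&& (0 < q)%N, coprimez p q%:Z & (0 <= 2 * q%:Z + p - 2)%R].

Definition admN (p : int) (q : nat) : nat := `|(2 * q%:Z + p - 1)%R|%N.

From HB Require Import structures.
From mathcomp Require Import all_boot all_order all_algebra.
From Stdlib Require Import ClassicalEpsilon Classical.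
From mathcomp Require Import ring zify.
Import Order.TTheory GRing.Theory Num.Theory.
Local Open Scope ring_scope.
Set Implicit Arguments. Unset Strict Implicit. Unset Printing Implicit Defensive.

(* Let [w] be a highest weight vector of the ad-module [R = ad(U) Q], of weight
   [2N].  Since [R] is irreducible it is spanned by the [(ad f)^j w], whose
   weights [2N - 2j] are distinct, so [u1] is a nonzero multiple of
   [(ad f)^N w]; likewise [u2] and [T u1] are nonzero multiples of the same
   vector of [R^T].  On a highest weight vector [v] of weight [mu], [u1] acts by
   the scalar [p1(mu)].  Hence if [Q], and so [R], annihilates [V(mu)], then
   [p1(mu) = 0].  Conversely, if [p1(mu) = 0] then [(ad f)^N w] kills [v], and
   weight considerations in the irreducible module [V(mu)] show that every
   [(ad f)^j w] does; so the annihilator of [R] in [V(mu)] is a nonzero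
   submodule, i.e. everything.  Finally, the functional [x |-> coefficient of
   [v_0] in [x.v_0]] on the Verma module [M(mu)] takes the value [p1(mu)] at
   [u1] and [p2(-mu)] at [T u2], a nonzero multiple of [u1]. *)

(** * Linear algebra *)

Section LinearMaps.
Variables (R : pzRingType) (V W : lmodType R) (g : V -> W).
Hypothesis lin_g : linear g.
Let gL : {linear V -> W} := HB.pack g (GRing.isLinear.Build _ _ _ _ _ lin_g).

Lemma lin0 : g 0 = 0. Proof. exact: (linear0 gL). Qed.
Lemma linD x y : g (x + y) = g x + g y. Proof. exact: (linearD gL). Qed.
Lemma linN x : g (- x) = - g x. Proof. exact: (linearN gL). Qed.
Lemma linB x y : g (x - y) = g x - g y. Proof. exact: (linearB gL). Qed.
Lemma linZ a x : g (a *: x) = a *: g x. Proof. exact: (linearZZ gL). Qed.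
Lemma lin_sum (I : Type) (r : seq I) (P : pred I) (F : I -> V) :
  g (\sum_(i <- r | P i) F i) = \sum_(i <- r | P i) g (F i).
Proof. exact: (linear_sum gL). Qed.
End LinearMaps.

Lemma linear_iter (R : pzRingType) (V : lmodType R) (g : V -> V) n :
  linear g -> linear (iter n g).
Proof. by move=> lin_g; elim: n => [|n IH] a x y //=; rewrite IH lin_g. Qed.

Lemma eigenvector_sum_eq0 (K : fieldType) (V : lmodType K) (A : V -> V) (I : eqType)
    (s : seq I) (v : I -> V) (ev : I -> K) (lam : K) :
  linear A -> {in s, forall i, A (v i) = ev i *: v i} -> {in s, forall i, ev i != lam} ->
  A (\sum_(i <- s) v i) = lam *: \sum_(i <- s) v i -> \sum_(i <- s) v i = 0.
Proof.
move=> linA; elim: s v => [|i s IH] v eig_v ev_ne A_sum; first by rewrite big_nil.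
set m := \sum_(j <- i :: s) v j in A_sum *.
have eig_s : {in s, forall j, A (v j) = ev j *: v j}.
  by move=> j sj; apply: eig_v; rewrite inE sj orbT.
(* Applying [A - ev i] kills the [i]-th term and keeps eigenvectors for the others. *)
have shiftE : (lam - ev i) *: m = \sum_(j <- s) (ev j - ev i) *: v j.
  rewrite scalerBl -A_sum /m (lin_sum linA) scaler_sumr -sumrB !big_cons.
  rewrite eig_v ?mem_head // subrr add0r; apply: eq_big_seq => j sj.
  by rewrite eig_s // scalerBl.
have shift0 : \sum_(j <- s) (ev j - ev i) *: v j = 0.
  apply: IH => [j sj|j sj|]; first by rewrite (linZ linA) eig_s // !scalerA mulrC.
    by apply: ev_ne; rewrite inE sj orbT.
  by rewrite -shiftE (linZ linA) A_sum !scalerA mulrC.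
apply/eqP; move/eqP: shift0; rewrite -shiftE scaler_eq0 subr_eq0 eq_sym.
by rewrite (negPf (ev_ne _ (mem_head _ _))).
Qed.

Lemma natr_affine_inj (R : numDomainType) (x : R) p q r s :
  x + p%:R - q%:R = x + r%:R - s%:R -> (p + s = q + r)%N.
Proof.
move=> E; apply/eqP; rewrite -(eqr_nat R) !natrD; apply/eqP.
have -> : p%:R + s%:R = (x + p%:R - q%:R) - (x + r%:R - s%:R) + (q%:R + r%:R) :> R by ring.
by rewrite E subrr add0r.
Qed.

Definition sum3 (V : nmodType) n (g : nat -> nat -> nat -> V) : V :=
  \sum_(a < n) \sum_(b < n) \sum_(c < n) g a b c.

Definition supported3 (V : nmodType) n (g : nat -> nat -> nat -> V) :=
  forall a b c, [|| (n <= a)%N, (n <= b)%N | (n <= c)%N] -> g a b c = 0.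

Lemma sum_ord_widen (V : nmodType) n n' (F : nat -> V) :
  (forall i, (n <= i)%N -> F i = 0) -> (n <= n')%N ->
  \sum_(i < n) F i = \sum_(i < n') F i.
Proof.
move=> F0 le_nn'; rewrite -(subnKC le_nn') big_split_ord /= [X in _ + X]big1 ?addr0 //.
by move=> i _; rewrite F0 ?leq_addr.
Qed.

Lemma sum3_widen (V : nmodType) n n' (g : nat -> nat -> nat -> V) :
  supported3 n g -> (n <= n')%N -> sum3 n g = sum3 n' g.
Proof.
move=> g0 le_nn'; rewrite /sum3.
rewrite (@sum_ord_widen _ n n' (fun a => \sum_(b < n) \sum_(c < n) g a b c) _ le_nn'); last first.
  by move=> a le_na; do 2![apply: big1 => ? _]; rewrite g0 ?le_na.
apply: eq_bigr => a _.
rewrite (@sum_ord_widen _ n n' (fun b => \sum_(c < n) g a b c) _ le_nn'); last first.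
  by move=> b le_nb; apply: big1 => c _; rewrite g0 ?le_nb ?orbT.
apply: eq_bigr => b _; apply: (@sum_ord_widen _ n n' (g a b)) => // c le_nc.
by rewrite g0 ?le_nc ?orbT.
Qed.

Lemma sum3_linear (R : pzRingType) (V : lmodType R) n (g1 g2 : nat -> nat -> nat -> V) a :
  sum3 n (fun i j k => a *: g1 i j k + g2 i j k) = a *: sum3 n g1 + sum3 n g2.
Proof.
rewrite /sum3 scaler_sumr -big_split; apply: eq_bigr => i _.
rewrite scaler_sumr -big_split; apply: eq_bigr => j _.
by rewrite scaler_sumr -big_split.
Qed.

Lemma sum_ord_delta (V : nmodType) n a (F : nat -> V) :
  (a < n)%N -> (forall i, i != a -> F i = 0) -> \sum_(i < n) F i = F a.
Proof.
move=> lt_an F0; rewrite (bigD1 (Ordinal lt_an)) //= big1 ?addr0 // => i.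
by rewrite -val_eqE => /F0.
Qed.

Lemma sum3_delta (V : nmodType) n a b c (g : nat -> nat -> nat -> V) :
  (maxn a (maxn b c) < n)%N ->
  sum3 n (fun i j k => if (i, j, k) == (a, b, c) then g i j k else 0) = g a b c.
Proof.
rewrite !gtn_max => /and3P[lt_an lt_bn lt_cn]; rewrite /sum3.
pose G i j k := if (i, j, k) == (a, b, c) then g i j k else 0.
rewrite (@sum_ord_delta _ n a (fun i => \sum_(j < n) \sum_(k < n) G i j k)) // => [|i ne_ia].
  rewrite (@sum_ord_delta _ n b (fun j => \sum_(k < n) G a j k)) // => [|j ne_jb].
    rewrite (@sum_ord_delta _ n c (G a b)) // => [|k ne_kc]; first by rewrite /G eqxx.
    by rewrite /G !xpair_eqE (negPf ne_kc) andbF.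
  by apply: big1 => ? _; rewrite /G !xpair_eqE (negPf ne_jb) andbF.
by do 2![apply: big1 => ? _]; rewrite /G !xpair_eqE (negPf ne_ia).
Qed.

(** * The enveloping algebra of sl2 *)

Section Bracket.
Variables (C : numClosedFieldType) (U : algType C).
Implicit Types x y z : U.

Lemma mul_lie x y : x * y = y * x + lie x y.
Proof. by rewrite /lie addrC subrK. Qed.

Lemma lie_linear x : linear (lie x).
Proof.
by move=> a y z; rewrite /lie mulrDr mulrDl -scalerAr -scalerAl opprD addrACA scalerBr.
Qed.

Lemma lie0 x : lie x 0 = 0. Proof. exact: (lin0 (lie_linear x)). Qed.
Lemma lieD x y z : lie x (y + z) = lie x y + lie x z. Proof. exact: (linD (lie_linear x)). Qed.
Lemma lieZ x a y : lie x (a *: y) = a *: lie x y. Proof. exact: (linZ (lie_linear x)). Qed.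

Lemma lieZl a x y : lie (a *: x) y = a *: lie x y.
Proof. by rewrite /lie -scalerAr -scalerAl scalerBr. Qed.

Lemma lie1 x : lie x 1 = 0.
Proof. by rewrite /lie mulr1 mul1r subrr. Qed.

Lemma lie_antisym x y : lie x y = - lie y x.
Proof. by rewrite /lie opprB. Qed.

Lemma lieMr x y z : lie x (y * z) = lie x y * z + y * lie x z.
Proof. by rewrite /lie mulrBl mulrBr !mulrA addrA subrK. Qed.

Lemma lie_jacobi x y z : lie x (lie y z) = lie (lie x y) z + lie y (lie x z).
Proof.
rewrite [lie y z]/lie (linB (lie_linear x)) !lieMr.
set A := lie x y; set D := lie x z; rewrite [lie A z]/lie [lie y D]/lie.
by rewrite opprD [- (D * y) - _]addrC addrACA.
Qed.

End Bracket.

Section Sl2Monomials.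
Variables (C : numClosedFieldType) (U : algType C) (e f h : U).
Hypothesis rel : sl2_relations e f h.
Local Notation mono := (pbw_mono e f h).

Lemma lie_he : lie h e = 2%:R *: e.
Proof. by case: rel => -> _ _; rewrite scaler_nat. Qed.

Lemma lie_hf : lie h f = - 2%:R *: f.
Proof. by case: rel => _ -> _; rewrite scaleNr scaler_nat. Qed.

Lemma lie_ef : lie e f = h.
Proof. by case: rel. Qed.

Lemma lie_h_fX a : lie h (f ^+ a) = - (a%:R * 2) *: f ^+ a.
Proof.
elim: a => [|a IH]; first by rewrite expr0 lie1 mul0r oppr0 scale0r.
rewrite exprS lieMr IH lie_hf -scalerAl -scalerAr -scalerDl; congr (_ *: _); ring.
Qed.

Lemma lie_e_fXS a :
  lie e (f ^+ a.+1) = a.+1%:R *: (f ^+ a * h) - (a.+1 * a)%:R *: f ^+ a.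
Proof.
elim: a => [|a IH]; first by rewrite expr1 expr0 mul1r lie_ef scale1r muln0 scale0r subr0.
rewrite exprS lieMr IH lie_ef (mul_lie h) lie_h_fX mulrBr -!scalerAr !mulrA -exprS.
rewrite scaleNr -[X in X + _ + _ = _]scale1r addrACA -scalerDl -opprD -scalerDl.
by congr (_ *: _ - _ *: _); rewrite -!natrM -!natrD; congr _%:R; lia.
Qed.

Lemma mul_f_mono a b c : f * mono a b c = mono a.+1 b c.
Proof. by rewrite /pbw_mono !mulrA exprS. Qed.

Lemma mul_h_mono a b c : h * mono a b c = mono a b.+1 c - (a%:R * 2) *: mono a b c.
Proof.
rewrite /pbw_mono !mulrA (mul_lie h) lie_h_fX scaleNr mulrDl mulNr -scalerAl.
by rewrite !mulrDl !mulNr -!scalerAl -(mulrA _ h) -exprS.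
Qed.

(* [e * f^a h^b e^c] is expanded through [f^a e h^b e^c], which is handled by
   induction on [b]. *)
Definition emono a b c := f ^+ a * e * h ^+ b * e ^+ c.

Lemma emono0 a c : emono a 0 c = mono a 0 c.+1.
Proof. by rewrite /emono /pbw_mono !expr0 !mulr1 exprS mulrA. Qed.

Lemma emonoS a b c : emono a b.+1 c = h * emono a b c + (a%:R * 2 - 2) *: emono a b c.
Proof.
have eh : e * h = h * e - 2%:R *: e by rewrite mul_lie lie_antisym lie_he.
have fh : f ^+ a * h = h * f ^+ a + (a%:R * 2) *: f ^+ a.
  by rewrite mul_lie lie_antisym lie_h_fX scaleNr opprK.
rewrite /emono exprS !mulrA -(mulrA _ e h) eh mulrBr mulrA fh -scalerAr.
rewrite !mulrBl !mulrDl -!scalerAl -addrA -scalerBl.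
by congr (_ + _ *: _); ring.
Qed.

Lemma mul_e_mono0 b c : e * mono 0 b c = emono 0 b c.
Proof. by rewrite /pbw_mono /emono !expr0 !mul1r !mulrA. Qed.

Lemma mul_e_monoS a b c : e * mono a.+1 b c =
  emono a.+1 b c + (a.+1%:R *: mono a b.+1 c - (a.+1 * a)%:R *: mono a b c).
Proof.
rewrite /pbw_mono /emono !mulrA (mul_lie e (f ^+ a.+1)) lie_e_fXS.
by rewrite !mulrDl !mulNr -!scalerAl -(mulrA _ h) -exprS.
Qed.

End Sl2Monomials.

Section PBWExpansion.
Variables (C : numClosedFieldType) (U : algType C) (e f h : U).
Hypothesis pbw : PBW_basis e f h.
Local Notation mono := (pbw_mono e f h).

Lemma pbw_ind (P : U -> Prop) :
  (forall (a : C) x y, P x -> P y -> P (a *: x + y)) ->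
  (forall a b c, P (mono a b c)) -> forall x, P x.
Proof.
move=> Plin Pmono.
have P0 : P 0 by have := Plin (-1) _ _ (Pmono 0 0 0)%N (Pmono 0 0 0)%N; rewrite scaleN1r addNr.
have PD x y : P x -> P y -> P (x + y) by move=> Px Py; have := Plin 1 _ _ Px Py; rewrite scale1r.
move=> x; have [[coef [n [_ ->]]] _] := pbw x.
do 3![apply: (big_ind P) => // ? _].
by rewrite -[_ *: _]addr0; apply: Plin.
Qed.

Definition pbw_rep_at n (coef : nat -> nat -> nat -> C) (u : U) :=
  supported3 n coef /\ u = sum3 n (fun a b c => coef a b c *: mono a b c).

Definition pbw_expansion (u : U) : (nat -> nat -> nat -> C) * nat :=
  epsilon (inhabits (fun _ _ _ => 0, 0%N)) (fun cn => pbw_rep_at cn.2 cn.1 u).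

Lemma pbw_expansionP u : pbw_rep_at (pbw_expansion u).2 (pbw_expansion u).1 u.
Proof.
pose P cn := pbw_rep_at cn.2 cn.1 u; suff : P (pbw_expansion u) by [].
apply: epsilon_spec; by have [[coef [n rep]] _] := pbw u; exists (coef, n).
Qed.

Lemma pbw_rep_at_widen n n' coef u :
  pbw_rep_at n coef u -> (n <= n')%N -> pbw_rep_at n' coef u.
Proof.
move=> [coef0 ->] le_nn'; split.
  by move=> a b c out; apply: coef0; case/or3P: out => /(leq_trans le_nn') ->; rewrite ?orbT.
by apply: sum3_widen => // a b c /coef0 ->; rewrite scale0r.
Qed.

Lemma pbw_rep_at_linear n cx cy (a : C) x y :
  pbw_rep_at n cx x -> pbw_rep_at n cy y ->
  pbw_rep_at n (fun i j k => a * cx i j k + cy i j k) (a *: x + y).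
Proof.
move=> [cx0 ->] [cy0 ->]; split => [i j k out|]; first by rewrite cx0 // cy0 // mulr0 addr0.
rewrite -sum3_linear; do 3![apply: eq_bigr => ? _].
by rewrite scalerDl scalerA.
Qed.

Lemma pbw_rep_at_mono a b c :
  pbw_rep_at (maxn a (maxn b c)).+1
    (fun i j k => ((i, j, k) == (a, b, c))%:R) (mono a b c).
Proof.
split => [i j k|].
  by case: eqP => // -[-> -> ->]; rewrite !ltnNge !leq_max !leqnn !orbT.
rewrite -(@sum3_delta _ (maxn a (maxn b c)).+1 a b c mono) //.
by do 3![apply: eq_bigr => ? _]; case: eqP; rewrite ?scale1r ?scale0r.
Qed.

Section Lift.
Variables (V : lmodType C) (g : nat -> nat -> nat -> V).

Definition pbw_lift (u : U) : V :=
  sum3 (pbw_expansion u).2 (fun a b c => (pbw_expansion u).1 a b c *: g a b c).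

Lemma pbw_liftE n coef u :
  pbw_rep_at n coef u -> pbw_lift u = sum3 n (fun a b c => coef a b c *: g a b c).
Proof.
move=> rep; have rep0 := pbw_expansionP u; rewrite /pbw_lift.
move: rep0; case: (pbw_expansion u) => coef0 n0 /= rep0.
have supp (c' : nat -> nat -> nat -> C) m : supported3 m c' ->
    supported3 m (fun a b c => c' a b c *: g a b c).
  by move=> c0 a b c /c0 ->; rewrite scale0r.
rewrite (sum3_widen (n' := maxn n0 n) (supp _ _ rep0.1)) ?leq_maxl //.
rewrite [RHS](sum3_widen (n' := maxn n0 n) (supp _ _ rep.1)) ?leq_maxr //.
have [rep0' rep'] := (pbw_rep_at_widen rep0 (leq_maxl n0 n), pbw_rep_at_widen rep (leq_maxr n0 n)).
do 3![apply: eq_bigr => ? _]; congr (_ *: _).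
by apply: (pbw u).2; [exists (maxn n0 n) | exists (maxn n0 n)].
Qed.

Lemma pbw_lift_linear : linear pbw_lift.
Proof.
move=> a x y; have [repx repy] := (pbw_expansionP x, pbw_expansionP y).
set nx := (pbw_expansion x).2 in repx; set ny := (pbw_expansion y).2 in repy.
have repx' := pbw_rep_at_widen repx (leq_maxl nx ny).
have repy' := pbw_rep_at_widen repy (leq_maxr nx ny).
rewrite (pbw_liftE (pbw_rep_at_linear a repx' repy')) (pbw_liftE repx') (pbw_liftE repy').
by rewrite -sum3_linear; do 3![apply: eq_bigr => ? _]; rewrite scalerDl scalerA.
Qed.

Lemma pbw_lift_mono a b c : pbw_lift (mono a b c) = g a b c.
Proof.
rewrite (pbw_liftE (pbw_rep_at_mono a b c)) -(@sum3_delta _ (maxn a (maxn b c)).+1 a b c g) //.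
by do 3![apply: eq_bigr => ? _]; case: eqP; rewrite ?scale1r ?scale0r.
Qed.

End Lift.
End PBWExpansion.

Section AdjointSpan.
Variables (C : numClosedFieldType) (U : algType C) (e f h : U).

Lemma ad_span_self X : ad_span e f h X X.
Proof. by exists [:: (1, [::])]; rewrite big_seq1 scale1r. Qed.

Lemma ad_span_lin X (a : C) x y :
  ad_span e f h X x -> ad_span e f h X y -> ad_span e f h X (a *: x + y).
Proof.
move=> [sx ->] [sy ->]; exists ([seq (a * p.1, p.2) | p <- sx] ++ sy).
by rewrite big_cat big_map scaler_sumr; congr (_ + _); apply: eq_bigr => p _; rewrite scalerA.
Qed.

Lemma ad_span_lie X i x :
  ad_span e f h X x -> ad_span e f h X (lie (sl2_gen e f h i) x).
Proof.
move=> [s ->]; exists [seq (p.1, i :: p.2) | p <- s].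
by rewrite big_map (lin_sum (lie_linear _)); apply: eq_bigr => p _; rewrite lieZ.
Qed.

Lemma ad_span_stable X : ad_stable e f h (ad_span e f h X).
Proof.
split; [by exists [::]; rewrite big_nil | exact: ad_span_lin | move=> x Xx].
by split; [exact: (ad_span_lie (@Ordinal 3 0 isT) Xx) | exact: (ad_span_lie (@Ordinal 3 1 isT) Xx)
  | exact: (ad_span_lie (@Ordinal 3 2 isT) Xx)].
Qed.

End AdjointSpan.

Section Transpose.
Variables (C : numClosedFieldType) (U : algType C) (e f h : U) (T : U -> U).
Hypothesis tr : is_transpose e f h T.

Lemma transpose_linear : linear T. Proof. by case: tr. Qed.
Lemma transposeM x y : T (x * y) = T y * T x. Proof. by case: tr. Qed.

Lemma transposeX x n : T (x ^+ n) = T x ^+ n.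
Proof.
case: tr => _ _ T1 _; elim: n => [|n IH]; first by rewrite !expr0.
by rewrite exprS transposeM IH exprSr.
Qed.

Lemma transpose_gen i : T (sl2_gen e f h i) = - sl2_gen e f h i.
Proof. by case: tr => _ _ _ [Te Tf Th]; rewrite /sl2_gen; case: ifP => _; last case: ifP. Qed.

Lemma transpose_lie_gen i x : T (lie (sl2_gen e f h i) x) = lie (sl2_gen e f h i) (T x).
Proof.
rewrite /lie (linB transpose_linear) !transposeM transpose_gen.
by rewrite mulrN mulNr opprK addrC.
Qed.

Lemma transpose_ad_span Q x : ad_span e f h Q x -> ad_span e f h (T Q) (T x).
Proof.
move=> [s ->]; exists s; rewrite (lin_sum transpose_linear); apply: eq_bigr => p _.
rewrite (linZ transpose_linear); congr (_ *: _).
by elim: p.2 => [|i l IH] //=; rewrite transpose_lie_gen IH.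
Qed.

Lemma transpose_peval p : T (peval p h) = peval p (- h).
Proof.
rewrite /peval (lin_sum transpose_linear); apply: eq_bigr => i _.
by rewrite (linZ transpose_linear) transposeX (transpose_gen (@Ordinal 3 2 isT)).
Qed.

Lemma transposeK : PBW_basis e f h -> forall x, T (T x) = x.
Proof.
move=> pbw; elim/(pbw_ind pbw) => [a x y IHx IHy|a b c].
  by rewrite !transpose_linear IHx IHy.
have TTgen i : T (T (sl2_gen e f h i)) = sl2_gen e f h i.
  by rewrite transpose_gen (linN transpose_linear) transpose_gen opprK.
rewrite /pbw_mono !transposeM !transposeX.
by rewrite (TTgen (@Ordinal 3 0 isT)) (TTgen (@Ordinal 3 1 isT)) (TTgen (@Ordinal 3 2 isT)).
Qed.

End Transpose.

(** * Modules defined by operators *)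

Section ModuleOfOperators.
Variables (C : numClosedFieldType) (U : algType C) (e f h : U).
Hypotheses (rel : sl2_relations e f h) (pbw : PBW_basis e f h).
Local Notation mono := (pbw_mono e f h).
Variables (M : lmodType C) (E F H : M -> M).
Hypotheses (linE : linear E) (linF : linear F) (linH : linear H).
Hypothesis HF_rel : forall x, H (F x) = F (H x) - 2%:R *: F x.
Hypothesis HE_rel : forall x, H (E x) = E (H x) + 2%:R *: E x.
Hypothesis EF_rel : forall x, E (F x) = F (E x) + H x.

Lemma H_iterF a x : H (iter a F x) = iter a F (H x) - (a%:R * 2) *: iter a F x.
Proof.
elim: a => [|a IH] /=; first by rewrite mul0r scale0r subr0.
rewrite HF_rel IH (linB linF) (linZ linF) -addrA -opprD -scalerDl.
by congr (_ - _ *: _); rewrite mulrSr; ring.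
Qed.

Lemma E_iterFS a x : E (iter a.+1 F x) =
  a.+1%:R *: iter a F (H x) - (a.+1 * a)%:R *: iter a F x + iter a.+1 F (E x).
Proof.
elim: a => [|a IH]; first by rewrite /= EF_rel scale1r muln0 scale0r subr0 addrC.
rewrite [iter a.+2 F x]/= EF_rel IH !(linD linF) (linN linF) !(linZ linF).
rewrite -/(iter a.+1 F (H x)) -/(iter a.+1 F x) (H_iterF a.+1 x).
rewrite addrAC; congr (_ + _).
rewrite addrACA -{2}[iter a.+1 F (H x)]scale1r -scalerDl -opprD -scalerDl.
by congr (_ *: _ - _ *: _); ring.
Qed.

Definition mono_op a b c x := iter a F (iter b H (iter c E x)).

Definition sl2_act (u : U) (m : M) : M := pbw_lift e f h (fun a b c => mono_op a b c m) u.
Local Notation act := sl2_act.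

Lemma sl2_act_linearl m : linear (act^~ m).
Proof. exact: pbw_lift_linear. Qed.

Lemma sl2_act_mono a b c m : act (mono a b c) m = mono_op a b c m.
Proof. exact: pbw_lift_mono. Qed.

Let actD x y m : act (x + y) m = act x m + act y m.
Proof. exact: (linD (sl2_act_linearl m)). Qed.
Let actZ a x m : act (a *: x) m = a *: act x m.
Proof. exact: (linZ (sl2_act_linearl m)). Qed.
Let actB x y m : act (x - y) m = act x m - act y m.
Proof. exact: (linB (sl2_act_linearl m)). Qed.

Lemma sl2_act_linear u : linear (act u).
Proof.
elim/(pbw_ind pbw): u => [a x y IHx IHy | a b c] a' m m'.
  rewrite !actD !actZ IHx IHy !scalerDr !scalerA [a * a']mulrC.
  by rewrite addrACA.
rewrite !sl2_act_mono /mono_op [iter c E _](linear_iter c linE).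
by rewrite [iter b H _](linear_iter b linH) [iter a F _](linear_iter a linF).
Qed.

Lemma sl2_act_mulf y m : act (f * y) m = F (act y m).
Proof.
elim/(pbw_ind pbw): y m => [a x y IHx IHy | a b c] m.
  by rewrite mulrDr -scalerAr !(sl2_act_linearl m) IHx IHy linF.
by rewrite mul_f_mono !sl2_act_mono.
Qed.

Lemma sl2_act_mulh y m : act (h * y) m = H (act y m).
Proof.
elim/(pbw_ind pbw): y m => [a x y IHx IHy | a b c] m.
  by rewrite mulrDr -scalerAr !(sl2_act_linearl m) IHx IHy linH.
by rewrite (mul_h_mono rel) actB actZ !sl2_act_mono /mono_op H_iterF.
Qed.

Lemma sl2_act_emono a b c m : act (emono e f h a b c) m = iter a F (E (iter b H (iter c E m))).
Proof.
elim: b => [|b IH]; first by rewrite emono0 sl2_act_mono.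
rewrite (emonoS rel) actD actZ sl2_act_mulh IH /=.
set y := iter b H (iter c E m).
have EH : E (H y) = H (E y) - 2%:R *: E y by rewrite HE_rel addrK.
rewrite H_iterF EH (linB (linear_iter a linF)) (linZ (linear_iter a linF)).
by rewrite -addrA -!scaleNr -scalerDl; congr (_ + _ *: _); ring.
Qed.

Lemma sl2_act_mule y m : act (e * y) m = E (act y m).
Proof.
elim/(pbw_ind pbw): y m => [a x y IHx IHy | a b c] m.
  by rewrite mulrDr -scalerAr !(sl2_act_linearl m) IHx IHy linE.
case: a => [|a]; first by rewrite mul_e_mono0 sl2_act_emono sl2_act_mono.
rewrite (mul_e_monoS rel) actD actB !actZ sl2_act_emono !sl2_act_mono /mono_op E_iterFS /=.
by rewrite addrC.
Qed.

Lemma sl2_act_mul x y m : act (x * y) m = act x (act y m).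
Proof.
elim/(pbw_ind pbw): x y m => [a x1 x2 IH1 IH2 | a b c] y m.
  by rewrite mulrDl -scalerAl !(sl2_act_linearl _) IH1 IH2.
rewrite sl2_act_mono /pbw_mono -!mulrA /mono_op.
elim: a => [|a IHa] /=; last by rewrite exprS -mulrA sl2_act_mulf IHa.
rewrite expr0 mul1r; elim: b => [|b IHb] /=; last by rewrite exprS -mulrA sl2_act_mulh IHb.
rewrite expr0 mul1r; elim: c => [|c IHc] /=; last by rewrite exprS -mulrA sl2_act_mule IHc.
by rewrite expr0 mul1r.
Qed.

Lemma sl2_act1 m : act 1 m = m.
Proof.
have -> : (1 : U) = mono 0 0 0 by rewrite /pbw_mono !expr0 !mulr1.
by rewrite sl2_act_mono.
Qed.

Lemma sl2_act_module : is_Umodule sl2_act.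
Proof.
split; [exact: sl2_act_linear | move=> a x y m | exact: sl2_act1 | exact: sl2_act_mul].
exact: sl2_act_linearl.
Qed.

Lemma sl2_act_generators m : [/\ act e m = E m, act f m = F m & act h m = H m].
Proof.
have := sl2_act_mono 0 0 1 m; have := sl2_act_mono 1 0 0 m; have := sl2_act_mono 0 1 0 m.
by rewrite /pbw_mono !expr0 !expr1 !mulr1 !mul1r => -> -> ->.
Qed.

End ModuleOfOperators.

(* A module with a weight basis [v_i] ([i] ranging over the initial segment
   [B] of [nat]) on which [h], [f], [e] act like on [f^i v_0] for a highest
   weight vector [v_0] of weight [mu]; it is described by coordinates. *)
Section WeightBasisModule.
Variables (C : numClosedFieldType) (M : lmodType C) (coord : nat -> M -> C).
Variables (B : pred nat) (mu : C) (E F H : M -> M).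
Hypothesis coord_scalar : forall i, scalar (coord i).
Hypothesis coord_inj : forall x y, (forall i, coord i x = coord i y) -> x = y.
Hypothesis coord_out : forall x i, ~~ B i -> coord i x = 0.
Hypothesis coordH : forall x i, coord i (H x) = (mu - i%:R * 2) * coord i x.
Hypothesis coordE : forall x i, coord i (E x) = (i.+1%:R * (mu - i%:R)) * coord i.+1 x.
Hypothesis coordF0 : forall x, coord 0 (F x) = 0.
Hypothesis coordFS : forall x i, coord i.+1 (F x) = if B i.+1 then coord i x else 0.
Hypothesis B_edge : forall i, B i -> ~~ B i.+1 -> mu = i%:R.

Lemma coord0 i : coord i 0 = 0.
Proof.
have := coord_scalar i 1 0 0; rewrite scale1r addr0 mul1r => c00.
by apply: (@addrI _ (coord i 0)); rewrite addr0 -c00.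
Qed.
Lemma coordD i x y : coord i (x + y) = coord i x + coord i y.
Proof. by have := coord_scalar i 1 x y; rewrite scale1r mul1r. Qed.
Lemma coordZ i a x : coord i (a *: x) = a * coord i x.
Proof. by have := coord_scalar i a x 0; rewrite !addr0 coord0 addr0. Qed.
Lemma coordN i x : coord i (- x) = - coord i x.
Proof. by rewrite -scaleN1r coordZ mulN1r. Qed.

Lemma wb_linearH : linear H.
Proof. by move=> a x y; apply: coord_inj => i; rewrite coordH !coord_scalar !coordH; ring. Qed.

Lemma wb_linearE : linear E.
Proof. by move=> a x y; apply: coord_inj => i; rewrite coordE !coord_scalar !coordE; ring. Qed.

Lemma wb_linearF : linear F.
Proof.
move=> a x y; apply: coord_inj => -[|i]; first by rewrite coord_scalar !coordF0; ring.
by rewrite coord_scalar !coordFS; case: (B i.+1); rewrite ?coord_scalar //; ring.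
Qed.

Lemma wb_HF x : H (F x) = F (H x) - 2%:R *: F x.
Proof.
apply: coord_inj => -[|i]; rewrite coordD coordN coordZ coordH ?coordF0; first ring.
by rewrite !coordFS; case: (B i.+1); rewrite ?coordH; ring.
Qed.

Lemma wb_HE x : H (E x) = E (H x) + 2%:R *: E x.
Proof. by apply: coord_inj => i; rewrite coordD coordZ coordH !coordE coordH; ring. Qed.

Lemma wb_EF x : E (F x) = F (E x) + H x.
Proof.
apply: coord_inj => -[|i]; rewrite coordD coordE coordH.
  rewrite coordF0 coordFS; case B1: (B 1); first ring.
  case B0: (B 0); last by rewrite coord_out ?B0 //; ring.
  by rewrite (B_edge B0) ?B1 //; ring.
rewrite !coordFS coordE; case Bi1: (B i.+1); last first.
  by rewrite (coord_out x) ?Bi1 //; case: (B _); ring.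
case Bi2: (B i.+2); first ring.
by rewrite (B_edge Bi1) ?Bi2 // -natr1; ring.
Qed.

Hypothesis B0 : B 0.
Hypothesis B_down : forall i, B i.+1 -> B i.
Hypothesis B_nonroot : forall j, B j.+1 -> mu != j%:R.
Hypothesis coord_finite : forall x, exists d, forall i, (d <= i)%N -> coord i x = 0.
Variable v0 : M.
Hypothesis coord_v0 : forall i, coord i v0 = (i == 0)%:R.

Lemma wb_hw_vector : [/\ v0 != 0, E v0 = 0 & H v0 = mu *: v0].
Proof.
split.
- by apply/eqP => v00; have := coord_v0 0; rewrite v00 coord0 => /eqP; rewrite eq_sym oner_eq0.
- by apply: coord_inj => i; rewrite coordE coord_v0 coord0 mulr0.
- by apply: coord_inj => -[|i]; rewrite coordH coordZ coord_v0 /=; ring.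
Qed.

Lemma coord_iterE x t i : coord i (iter t E x) =
  (\prod_(j < t) ((i + j).+1%:R * (mu - (i + j)%:R))) * coord (i + t) x.
Proof.
elim: t i => [|t IH] i; first by rewrite big_ord0 mul1r addn0.
rewrite /= coordE IH big_ord_recl /= addn0 addSnnS mulrA; congr (_ * _ * _).
by apply: eq_bigr => j _; rewrite /bump /= add1n addSnnS.
Qed.

Lemma coord_iterF_v0 i j : coord j (iter i F v0) = ((j == i) && B i)%:R.
Proof.
elim: i j => [|i IH] [|j] /=; rewrite ?coord_v0 ?B0 ?andbT ?coordF0 // coordFS IH eqSS.
case: (eqVneq j i) => [->|_] /=; last by case: (B _).
by case Bi1: (B i.+1); rewrite ?(B_down Bi1).
Qed.

Lemma B_le i j : (i <= j)%N -> B j -> B i.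
Proof. by move/subnK <-; elim: (j - i)%N => // k IH; rewrite addSn => /B_down. Qed.

(* Pushing a nonzero vector up with [E] as far as it goes gives a multiple of [v0]. *)
Lemma wb_hw_generated (S : M -> Prop) x :
  (forall (a : C) u w, S u -> S w -> S (a *: u + w)) -> (forall u, S u -> S (E u)) ->
  S x -> x != 0 -> S v0.
Proof.
move=> S_lin S_E Sx x_neq0.
have S0 : S 0 by have := S_lin (-1) _ _ Sx Sx; rewrite scaleN1r addNr.
have [D coordD0] := coord_finite x.
have [i xi_neq0] : exists i, coord i x != 0.
  apply: NNPP => none; move/eqP: x_neq0; apply; apply: coord_inj => i; rewrite coord0.
  by case: (eqVneq (coord i x) 0) => // xi; case: none; exists i.
have le_D j : coord j x != 0 -> (j <= D)%N.
  by move=> xj; case: (leqP D j) => [/coordD0 xj0|/ltnW //]; rewrite xj0 eqxx in xj.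
have [d xd_neq0 d_max] := ex_maxnP (ex_intro (fun i => coord i x != 0) i xi_neq0) le_D.
have Bd : B d by apply: contraR xd_neq0 => /coord_out ->; rewrite eqxx.
have Sit t : S (iter t E x) by elim: t => //= t; apply: S_E.
pose y := iter d E x; have Sy : S y := Sit d.
have y0 : coord 0 y != 0.
  rewrite /y coord_iterE add0n mulf_neq0 //; apply/prodf_neq0 => j _.
  by rewrite add0n mulf_neq0 ?pnatr_eq0 // subr_eq0 B_nonroot // (B_le _ Bd).
have yS j : coord j.+1 y = 0.
  rewrite /y coord_iterE; case: (eqVneq (coord (j.+1 + d) x) 0) => [->|xj]; first by rewrite mulr0.
  by have := d_max _ xj; rewrite addSn ltnNge leq_addl.
suff -> : v0 = (coord 0 y)^-1 *: y by rewrite -[_ *: y]addr0; apply: S_lin.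
by apply: coord_inj => -[|j]; rewrite coordZ coord_v0 /= ?mulVf // yS mulr0.
Qed.

Lemma wb_spanned_by_iterF (S : M -> Prop) :
  (forall (a : C) u w, S u -> S w -> S (a *: u + w)) -> (forall u, S u -> S (F u)) ->
  S v0 -> forall z, S z.
Proof.
move=> S_lin S_F Sv0.
have S0 : S 0 by have := S_lin (-1) _ _ Sv0 Sv0; rewrite scaleN1r addNr.
have Sv t : S (iter t F v0) by elim: t => //= t; apply: S_F.
move=> z; have [d] := coord_finite z; elim: d z => [|n IH] z zn.
  by have -> : z = 0 by apply: coord_inj => j; rewrite coord0 zn.
rewrite -(subrK (coord n z *: iter n F v0) z) addrC; apply: S_lin => //.
apply: IH => j le_nj; rewrite coordD coordN coordZ coord_iterF_v0.
case: (ltngtP n j) => [lt_nj|lt_jn|<-].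
- by rewrite zn // mulr0 subr0.
- by move: le_nj; rewrite leqNgt lt_jn.
by case Bn: (B n); rewrite /= ?mulr1 ?mulr0 ?subrr ?subr0 // coord_out ?Bn.
Qed.

Variables (U : algType C) (e f h : U).
Hypotheses (rel : sl2_relations e f h) (pbw : PBW_basis e f h).

Lemma wb_module : exists act : U -> M -> M,
  is_Umodule act /\ forall m, [/\ act e m = E m, act f m = F m & act h m = H m].
Proof.
exists (sl2_act e f h E F H); split; last exact: sl2_act_generators.
exact: (sl2_act_module rel pbw wb_linearE wb_linearF wb_linearH wb_HF wb_HE wb_EF).
Qed.

Lemma wb_irreducible_hw_module : exists act : U -> M -> M,
  [/\ is_Umodule act, irreducible_module act & hw_vector e h act v0 mu].
Proof.
have [act [act_mod act_gen]] := wb_module.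
have [v0_neq0 Ev0 Hv0] := wb_hw_vector.
exists act; split => //; last by have [Ae _ Ah] := act_gen v0; split; rewrite ?Ae ?Ah.
split; first by exists v0.
move=> S [S0 S_lin S_act].
case: (classic (forall v, S v -> v = 0)) => [S_triv|S_nontriv]; [by left | right].
have [x nonzero_x] := not_all_ex_not _ _ S_nontriv.
have [Sx x_neq0] := imply_to_and _ _ nonzero_x.
have [S_E S_F] : (forall u, S u -> S (E u)) /\ (forall u, S u -> S (F u)).
  by split=> u Su; [have [<- _ _] := act_gen u | have [_ <- _] := act_gen u]; apply: S_act.
apply: (wb_spanned_by_iterF S_lin S_F).
exact: (wb_hw_generated S_lin S_E Sx (introN eqP x_neq0)).
Qed.

End WeightBasisModule.

Section VermaOperators.
Variables (C : numClosedFieldType) (mu : C).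

(* The Verma module [M(mu)] realized on [{poly C}], ['X^i] standing for [f^i v_0]. *)
Definition verma_h (p : {poly C}) : {poly C} := \poly_(i < size p) ((mu - i%:R * 2) * p`_i).
Definition verma_e (p : {poly C}) : {poly C} :=
  \poly_(i < size p) ((i.+1%:R * (mu - i%:R)) * p`_i.+1).

Lemma coef_verma_h p i : (verma_h p)`_i = (mu - i%:R * 2) * p`_i.
Proof. by rewrite coef_poly; case: ltnP => // le_pi; rewrite nth_default // mulr0. Qed.

Lemma coef_verma_e p i : (verma_e p)`_i = (i.+1%:R * (mu - i%:R)) * p`_i.+1.
Proof.
by rewrite coef_poly; case: ltnP => // le_pi; rewrite nth_default ?mulr0 // (leq_trans le_pi).
Qed.

End VermaOperators.

Lemma coef_scalar (C : numClosedFieldType) i : scalar (fun p : {poly C} => p`_i).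
Proof. by move=> a p q; rewrite coefD coefZ. Qed.

Section HighestWeightModules.
Variables (C : numClosedFieldType) (U : algType C) (e f h : U).
Hypotheses (rel : sl2_relations e f h) (pbw : PBW_basis e f h).

Lemma verma_module (mu : C) : exists act : U -> {poly C} -> {poly C}, is_Umodule act /\
  forall m, [/\ act e m = verma_e mu m, act f m = 'X * m & act h m = verma_h mu m].
Proof.
apply: (@wb_module C {poly C} (fun i p => p`_i) predT mu) => //; first exact: coef_scalar.
- by move=> p q pq; apply/polyP => i; apply: pq.
- exact: coef_verma_h.
- exact: coef_verma_e.
- by move=> p; rewrite coefXM.
- by move=> p i; rewrite coefXM.
Qed.

Lemma exists_irreducible_hw_module (mu : C) : exists (M : lmodType C) (act : U -> M -> M) v,
  [/\ is_Umodule act, irreducible_module act & hw_vector e h act v mu].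
Proof.
case: (classic (exists k : nat, mu = k%:R)) => [[k ->]|mu_notN]; last first.
  have [act irr_act] : exists act : U -> {poly C} -> {poly C},
      [/\ is_Umodule act, irreducible_module act & hw_vector e h act 1 mu].
    apply: (@wb_irreducible_hw_module C {poly C} (fun i p => p`_i) predT mu
      (verma_e mu) (fun p => 'X * p) (verma_h mu)) => //; last exact: rel.
    - exact: coef_scalar.
    - by move=> p q pq; apply/polyP => i; apply: pq.
    - exact: coef_verma_h.
    - exact: coef_verma_e.
    - by move=> p; rewrite coefXM.
    - by move=> p i; rewrite coefXM.
    - by move=> j _; apply/eqP => mu_j; apply: mu_notN; exists j.
    - by move=> p; exists (size p) => i; apply: nth_default.
    - exact: coef1.
  by exists _, act, 1.
(* For [mu = k] the simple quotient of [M(k)] is spanned by [f^i v_0], [i <= k]. *)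
pose M := {poly_k.+1 C}; pose trunc (p : {poly C}) : M := npolyp k.+1 p.
have coef_out (p : M) i : (k < i)%N -> (p : {poly C})`_i = 0 by move=> ?; apply: big_coef_npoly.
have [act irr_act] : exists act : U -> M -> M,
    [/\ is_Umodule act, irreducible_module act & hw_vector e h act (trunc 1) k%:R].
  apply: (@wb_irreducible_hw_module C M (fun i p => (p : {poly C})`_i) (fun i => i <= k)%N k%:R
    (trunc \o verma_e k%:R) (trunc \o (fun p => 'X * p)) (trunc \o verma_h k%:R)) => //=;
    last exact: rel.
  - by move=> i a p q; rewrite coefD coefZ.
  - by move=> p q pq; apply/npolyP => i; apply: pq.
  - by move=> p i; rewrite -ltnNge => /coef_out.
  - by move=> p i; rewrite coef_npolyp coef_verma_h; case: ltnP => // ?; rewrite coef_out ?mulr0.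
  - move=> p i; rewrite coef_npolyp coef_verma_e.
    by case: ltnP => // ?; rewrite coef_out ?mulr0 // ltnW.
  - by move=> p; rewrite coef_npolyp coefXM.
  - by move=> p i; rewrite coef_npolyp coefXM ltnS.
  - by move=> i le_ik /negbTE lt_ki; congr _%:R; apply/eqP; rewrite eqn_leq le_ik leqNgt lt_ki.
  - by move=> i /ltnW.
  - by move=> j lt_jk; rewrite eqr_nat neq_ltn lt_jk orbT.
  - by move=> p; exists k.+1 => i; apply: coef_out.
  - by move=> i; rewrite coef_npolyp coef1; case: ltnP => //; case: i.
by exists M, act, (trunc 1).
Qed.

End HighestWeightModules.

(** * Highest weight modules *)

Section ModuleFacts.
Variables (C : numClosedFieldType) (U : algType C) (M : lmodType C) (act : U -> M -> M).
Hypothesis act_mod : is_Umodule act.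

Lemma act_linear x : linear (act x).
Proof. by case: act_mod => lin _ _ _ a v w; rewrite lin. Qed.

Lemma act_linearl v : linear (act^~ v).
Proof. by case: act_mod => _ lin _ _ a x y; rewrite lin. Qed.

Lemma act_mul x y v : act (x * y) v = act x (act y v).
Proof. by case: act_mod. Qed.

Lemma act1 v : act 1 v = v.
Proof. by case: act_mod. Qed.

Lemma act0 x : act x 0 = 0. Proof. exact: (lin0 (act_linear x)). Qed.
Lemma act0l v : act 0 v = 0. Proof. exact: (lin0 (act_linearl v)). Qed.
Lemma actDl x y v : act (x + y) v = act x v + act y v. Proof. exact: (linD (act_linearl v)). Qed.
Lemma actZl a x v : act (a *: x) v = a *: act x v. Proof. exact: (linZ (act_linearl v)). Qed.
Lemma actNl x v : act (- x) v = - act x v. Proof. exact: (linN (act_linearl v)). Qed.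
Lemma actZ x a v : act x (a *: v) = a *: act x v. Proof. exact: (linZ (act_linear x)). Qed.

Lemma act_lie x y v : act (lie x y) v = act x (act y v) - act y (act x v).
Proof. by rewrite /lie (linB (act_linearl v)) !act_mul. Qed.

Lemma act_exp x n v : act (x ^+ n) v = iter n (act x) v.
Proof. by elim: n => [|n IH]; rewrite ?expr0 ?act1 // exprS act_mul IH. Qed.

Lemma act_eigen_exp x c v n : act x v = c *: v -> act (x ^+ n) v = c ^+ n *: v.
Proof.
move=> xv; rewrite act_exp; elim: n => [|n IH]; first by rewrite expr0 scale1r.
by rewrite iterS IH actZ xv scalerA -exprSr.
Qed.

Lemma act_eigen_peval (p : {poly C}) x c v :
  act x v = c *: v -> act (peval p x) v = p.[c] *: v.
Proof.
move=> xv; rewrite /peval (lin_sum (act_linearl v)) horner_coef scaler_suml.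
by apply: eq_bigr => i _; rewrite actZl (act_eigen_exp _ xv) scalerA.
Qed.

Lemma irreducible_cyclic v : irreducible_module act -> v != 0 -> forall m, exists u, m = act u v.
Proof.
move=> [_ irr] v_neq0.
have orbit_sub : is_submodule act (fun m => exists u, m = act u v).
  split; first by exists 0; rewrite act0l.
    by move=> a _ _ [x ->] [y ->]; exists (a *: x + y); rewrite (act_linearl v).
  by move=> x _ [u ->]; exists (x * u); rewrite act_mul.
have [orbit0|//] := irr _ orbit_sub.
by have := orbit0 v (ex_intro _ 1 (esym (act1 v))); move/eqP: v_neq0.
Qed.

Variables (e f h : U).

Lemma ad_span_annihilator Q :
  (forall m, act Q m = 0) -> forall x, ad_span e f h Q x -> forall m, act x m = 0.
Proof.
move=> Q0 x [s ->] m; rewrite (lin_sum (act_linearl m)) big1 // => p _.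
rewrite actZl; suff -> : act (adw [seq sl2_gen e f h i | i <- p.2] Q) m = 0 by rewrite scaler0.
by elim: p.2 m => [|i l IH] m //=; rewrite act_lie IH act0 IH subrr.
Qed.

Hypotheses (rel : sl2_relations e f h) (pbw : PBW_basis e f h).

Lemma hw_act_rep (p : {poly C}) y v mu : hw_vector e h act v mu ->
  act (peval p h + y * e) v = p.[mu] *: v.
Proof. by case=> _ ev hv; rewrite actDl act_mul ev act0 addr0 (act_eigen_peval _ hv). Qed.

Lemma act_h_iterf v lam : act h v = lam *: v -> forall a,
  act h (iter a (act f) v) = (lam - a%:R * 2) *: iter a (act f) v.
Proof.
move=> hv; have hf_act x : act h (act f x) = act f (act h x) - 2%:R *: act f x.
  by rewrite -[act h _](subrK (act f (act h x))) -act_lie (lie_hf rel) actZl scaleNr addrC.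
elim=> [|a IH]; first by rewrite /= hv mul0r subr0.
by rewrite /= hf_act IH actZ -scalerBl; congr (_ *: _); rewrite mulrSr; ring.
Qed.

Lemma hw_orbit_span v lam : act e v = 0 -> act h v = lam *: v ->
  forall u, exists s : seq (C * nat), act u v = \sum_(p <- s) p.1 *: iter p.2 (act f) v.
Proof.
move=> ev hv; elim/(pbw_ind pbw) => [a x y [sx xE] [sy yE] | a b [|c]].
- exists ([seq (a * p.1, p.2) | p <- sx] ++ sy); rewrite (act_linearl v) xE yE big_cat big_map.
  by rewrite scaler_sumr; congr (_ + _); apply: eq_bigr => p _; rewrite scalerA.
- exists [:: (lam ^+ b, a)]; rewrite big_seq1 /pbw_mono expr0 mulr1 !act_mul.
  by rewrite (act_eigen_exp _ hv) actZ act_exp.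
- by exists [::]; rewrite big_nil /pbw_mono !act_mul exprSr act_mul ev !act0.
Qed.

Lemma hw_weight_eq0 v lam m lam' : irreducible_module act -> v != 0 ->
  act e v = 0 -> act h v = lam *: v -> act h m = lam' *: m ->
  (forall a : nat, lam' != lam - a%:R * 2) -> m = 0.
Proof.
move=> irr v_neq0 ev hv hm lam'_out.
have [u mE] := irreducible_cyclic irr v_neq0 m.
have [s uvE] := hw_orbit_span ev hv u; rewrite mE uvE in hm *.
apply: (@eigenvector_sum_eq0 _ _ (act h) _ s (fun p => p.1 *: iter p.2 (act f) v)
  (fun p => lam - p.2%:R * 2) lam' (act_linear h)) => [p _|p _|].
- by rewrite actZ (act_h_iterf hv) scalerA mulrC -scalerA.
- by rewrite eq_sym.
- exact: hm.
Qed.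

Lemma ad_span_annihilator_submodule X :
  is_submodule act (fun m => forall x, ad_span e f h X x -> act x m = 0).
Proof.
set K := fun m => _.
have K_lin a v w : K v -> K w -> K (a *: v + w).
  by move=> Kv Kw x Xx; rewrite (act_linear x) Kv // Kw // scaler0 addr0.
have K_pow i n m : K m -> K (act (sl2_gen e f h i ^+ n) m).
  elim: n m => [|n IH] m Km; first by rewrite expr0 act1.
  move=> x Xx; rewrite exprS act_mul -act_mul (mul_lie x) lie_antisym actDl actNl act_mul.
  by rewrite IH // act0 add0r IH ?oppr0 //; apply: ad_span_lie.
split => [x _|//|]; first by rewrite act0.
elim/(pbw_ind pbw) => [a x y Kx Ky | a b c] m Km.
  by rewrite (act_linearl m); apply: K_lin; [apply: Kx | apply: Ky].
rewrite /pbw_mono !act_mul; apply: (K_pow (@Ordinal 3 1 isT)).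
by apply: (K_pow (@Ordinal 3 2 isT)); apply: (K_pow (@Ordinal 3 0 isT)).
Qed.

End ModuleFacts.

(** * The adjoint module generated by a highest weight vector *)

Section HighestWeightChain.
Variables (C : numClosedFieldType) (U : algType C) (e f h : U).
Hypothesis rel : sl2_relations e f h.
Variables (n : nat) (w : U).
Hypotheses (ew : lie e w = 0) (hw : lie h w = n%:R *: w).

Definition adf_chain j := iter j (lie f) w.

Lemma lie_h_chain j : lie h (adf_chain j) = (n%:R - j%:R * 2) *: adf_chain j.
Proof.
elim: j => [|j IH]; first by rewrite /= hw mul0r subr0.
rewrite /= lie_jacobi IH (lie_hf rel) lieZl lieZ -scalerDl; congr (_ *: _); ring.
Qed.

Lemma lie_e_chainS j : lie e (adf_chain j.+1) = (j.+1%:R * (n%:R - j%:R)) *: adf_chain j.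
Proof.
elim: j => [|j IH]; first by rewrite /= lie_jacobi (lie_ef rel) ew lie0 addr0 hw mul1r subr0.
rewrite [adf_chain j.+2]/= -/(adf_chain j.+1) lie_jacobi (lie_ef rel) IH lieZ.
by rewrite (lie_h_chain j.+1) -scalerDl; congr (_ *: _); ring.
Qed.

Definition chain_span x := exists s : seq (C * nat), x = \sum_(p <- s) p.1 *: adf_chain p.2.

Lemma chain_span_stable : ad_stable e f h chain_span.
Proof.
have lie_sum g s : lie g (\sum_(p <- s) p.1 *: adf_chain p.2) =
    \sum_(p <- s) p.1 *: lie g (adf_chain p.2).
  by rewrite (lin_sum (lie_linear g)); apply: eq_bigr => p _; rewrite lieZ.
split.
- by exists [::]; rewrite big_nil.
- move=> a x y [sx ->] [sy ->]; exists ([seq (a * p.1, p.2) | p <- sx] ++ sy).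
  by rewrite big_cat big_map scaler_sumr; congr (_ + _); apply: eq_bigr => p _; rewrite scalerA.
move=> x [s ->]; rewrite !lie_sum; split.
- exists [seq (p.1 * (p.2%:R * (n%:R - p.2.-1%:R)), p.2.-1) | p <- s].
  rewrite big_map; apply: eq_bigr => -[a [|j]] _ /=; last by rewrite lie_e_chainS scalerA.
  by rewrite ew scaler0 mul0r mulr0 scale0r.
- by exists [seq (p.1, p.2.+1) | p <- s]; rewrite big_map.
- exists [seq (p.1 * (n%:R - p.2%:R * 2), p.2) | p <- s].
  by rewrite big_map; apply: eq_bigr => p _; rewrite lie_h_chain scalerA.
Qed.

Lemma ad_iso_V_chain_span X : ad_iso_V e f h (ad_span e f h X) n ->
  ad_span e f h X w -> w != 0 -> forall x, ad_span e f h X x -> chain_span x.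
Proof.
move=> [_ irr _] Xw w_neq0.
have X_chain j : ad_span e f h X (adf_chain j).
  by elim: j => //= j; apply: (ad_span_lie (@Ordinal 3 1 isT)).
have chain_X x : chain_span x -> ad_span e f h X x.
  move=> [s ->]; elim: s => [|p s IH]; first by rewrite big_nil; case: (ad_span_stable e f h X).
  by rewrite big_cons; apply: ad_span_lin.
case: (irr _ chain_span_stable chain_X) => [chain0|//].
have : chain_span w by exists [:: (1, 0%N)]; rewrite big_seq1 scale1r.
by move/chain0 => w0; rewrite w0 eqxx in w_neq0.
Qed.

(* The weights [n - 2j] of the [adf_chain j] are pairwise distinct. *)
Lemma chain_span_zero_weight N x : n = (2 * N)%N -> chain_span x -> lie h x = 0 ->
  exists k : C, x = k *: adf_chain N.
Proof.
move=> nE [s ->] hx0; exists (\sum_(p <- s | p.2 == N) p.1).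
rewrite (bigID (fun p : C * nat => p.2 == N)) /= scaler_suml.
rewrite -(big_filter _ (fun p : C * nat => p.2 != N)); set t := [seq p <- s | p.2 != N].
rewrite [X in _ + X](@eigenvector_sum_eq0 _ _ (lie h) _ _ _
  (fun p => n%:R - p.2%:R * 2) 0 (lie_linear h)) ?addr0; first by apply: eq_bigr => p /eqP ->.
- by move=> p _; rewrite lieZ lie_h_chain scalerA mulrC -scalerA.
- move=> p; rewrite mem_filter => /andP[ne_pN _].
  by rewrite nE subr_eq0 -natrM eqr_nat mulnC eqn_pmul2r // eq_sym.
move: hx0; rewrite (bigID (fun p : C * nat => p.2 == N)) /=.
rewrite -(big_filter _ (fun p : C * nat => p.2 != N)) -/t.
rewrite lieD (lin_sum (lie_linear h)) big1 ?add0r => [->|p /eqP ->]; first by rewrite scale0r.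
by rewrite lieZ lie_h_chain nE mulnC natrM subrr scale0r scaler0.
Qed.

End HighestWeightChain.

(** * Annihilation of V(mu) and the roots of p1 and p2 *)

Section HighestWeightAnnihilation.
Variables (C : numClosedFieldType) (U : algType C) (e f h : U).
Hypotheses (rel : sl2_relations e f h) (pbw : PBW_basis e f h).
Variables (Q : U) (N : nat).
Hypothesis isoR : ad_iso_V e f h (ad_span e f h Q) (2 * N).

Lemma ad_iso_V_zero_weight w x : ad_span e f h Q w -> w != 0 -> lie e w = 0 ->
  lie h w = (2 * N)%:R *: w -> ad_span e f h Q x -> lie h x = 0 ->
  exists k : C, x = k *: adf_chain f w N.
Proof.
move=> Qw w_neq0 ew hw Qx hx.
exact: (chain_span_zero_weight rel hw) (ad_iso_V_chain_span rel ew hw isoR Qw w_neq0 Qx) hx.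
Qed.

Lemma annihilated_root u (p : {poly C}) y mu :
  Vmu_annihilated_by e h Q mu -> ad_span e f h Q u -> u = peval p h + y * e -> p.[mu] = 0.
Proof.
move=> ann Qu uE; have [M [act [v [act_mod irr hwv]]]] := exists_irreducible_hw_module rel pbw mu.
have := ad_span_annihilator act_mod (ann M act act_mod irr (ex_intro _ v hwv)) Qu v.
rewrite uE (hw_act_rep act_mod _ _ hwv) => /eqP; rewrite scaler_eq0.
by case: hwv => /negPf -> _ _; rewrite orbF => /eqP.
Qed.

Section ChainOnHighestWeightVector.
Variables (w : U) (M : lmodType C) (act : U -> M -> M) (v : M) (mu : C).
Hypotheses (ew : lie e w = 0) (hw : lie h w = (2 * N)%:R *: w).
Hypotheses (act_mod : is_Umodule act) (irr : irreducible_module act).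
Hypothesis hwv : hw_vector e h act v mu.

Lemma act_chain_weight j : act h (act (adf_chain f w j) v) =
  (mu + (2 * N)%:R - (j * 2)%:R) *: act (adf_chain f w j) v.
Proof.
case: hwv => _ _ hv.
rewrite -[LHS](subrK (act (adf_chain f w j) (act h v))) -act_lie // (lie_h_chain rel hw).
by rewrite actZl // hv actZ // -scalerDl natrM; congr (_ *: _); ring.
Qed.

(* For [j < N], [(ad f)^j w . v] has a weight above [mu]; for [j > N] it is
   inductively killed by [e], so if nonzero it would generate the module
   although [mu] is not below its weight. *)
Lemma chain_annihilates_hw_vector :
  act (adf_chain f w N) v = 0 -> forall j, act (adf_chain f w j) v = 0.
Proof.
move=> chainN0 j; case: (hwv) => v_neq0 ev hv.
have [lt_jN|le_Nj] := ltnP j N.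
  apply: (hw_weight_eq0 act_mod rel pbw irr v_neq0 ev hv (act_chain_weight j)) => a.
  apply/eqP => wt_eq; have E : mu - a%:R * 2 = mu + 0%:R - (a * 2)%:R by rewrite natrM addr0.
  by have := natr_affine_inj (etrans wt_eq E); lia.
rewrite -(subnKC le_Nj); elim: (j - N)%N => [|k IH]; first by rewrite addn0.
set m := act (adf_chain f w (N + k.+1)) v; have [//|m_neq0] := eqVneq m 0.
suff v0 : v = 0 by rewrite v0 eqxx in v_neq0.
have em : act e m = 0.
  rewrite /m -[LHS](subrK (act (adf_chain f w (N + k.+1)) (act e v))) -act_lie //.
  by rewrite addnS (lie_e_chainS rel ew hw) actZl // IH scaler0 ev act0 // add0r.
apply: (hw_weight_eq0 act_mod rel pbw irr m_neq0 em (act_chain_weight _) hv) => a.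
apply/eqP => wt_eq.
have E1 : mu + 0%:R - 0%:R = mu by rewrite addr0 subr0.
have E2 : mu + (2 * N)%:R - ((N + k.+1) * 2)%:R - a%:R * 2 =
    mu + (2 * N)%:R - ((N + k.+1) * 2 + a * 2)%:R.
  by rewrite natrD [(a * 2)%:R]natrM opprD addrA.
by have := natr_affine_inj (etrans E1 (etrans wt_eq E2)); lia.
Qed.

End ChainOnHighestWeightVector.

Lemma root_annihilated w u (k : C) (p : {poly C}) y mu :
  ad_span e f h Q w -> w != 0 -> lie e w = 0 -> lie h w = (2 * N)%:R *: w ->
  u = k *: adf_chain f w N -> k != 0 -> u = peval p h + y * e -> p.[mu] = 0 ->
  Vmu_annihilated_by e h Q mu.
Proof.
move=> Qw w_neq0 ew hw uk k_neq0 uE p0 M act act_mod irr [v hwv].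
have chainN0 : act (adf_chain f w N) v = 0.
  have := hw_act_rep act_mod p y hwv; rewrite -uE uk actZl // p0 scale0r.
  by move/eqP; rewrite scaler_eq0 (negPf k_neq0) => /eqP.
have Rv x : ad_span e f h Q x -> act x v = 0.
  move=> /(ad_iso_V_chain_span rel ew hw isoR Qw w_neq0) [s ->].
  rewrite (lin_sum (act_linearl act_mod v)) big1 // => q _.
  by rewrite actZl // (chain_annihilates_hw_vector ew hw act_mod irr hwv chainN0) scaler0.
case: irr => _ /(_ _ (ad_span_annihilator_submodule act_mod pbw Q)) [ann0|annT].
  by case: hwv => /eqP v_neq0 _ _; have := ann0 v Rv.
by move=> m; apply: annT; exact: ad_span_self.
Qed.

End HighestWeightAnnihilation.

Section TransposedRoots.
Variables (C : numClosedFieldType) (U : algType C) (e f h : U) (T : U -> U).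
Hypotheses (rel : sl2_relations e f h) (pbw : PBW_basis e f h).
Hypothesis tr : is_transpose e f h T.

(* [psi x] is the coefficient of [v_0] in [x . v_0], [v_0] the highest weight
   vector of the Verma module [M(mu)]. *)
Lemma verma_functional mu : exists psi : U -> C,
  [/\ forall k x, psi (k *: x) = k * psi x,
      forall p y, psi (peval p h + y * e) = p.[mu] &
      forall p y, psi (T (peval p h + y * f)) = p.[- mu]].
Proof.
have [act [act_mod act_gen]] := verma_module rel pbw mu.
have hw1 : hw_vector e h act 1 mu.
  have [Ae _ Ah] := act_gen 1; split; [exact: oner_neq0 | rewrite Ae | rewrite Ah].
    by apply/polyP => i; rewrite coef_verma_e coef1 coef0 /= mulr0.
  by apply/polyP => -[|i]; rewrite coef_verma_h coefZ coef1 /= ?mulr0 // mul0r subr0.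
have [_ _ h1] := hw1.
exists (fun x => (act x 1)`_0); split => [k x|p y|p y].
- by rewrite actZl // coefZ.
- by rewrite (hw_act_rep act_mod p y hw1) coefZ coef1 mulr1.
rewrite (linD (transpose_linear tr)) (transpose_peval tr) (transposeM tr).
rewrite (transpose_gen tr (@Ordinal 3 1 isT)) actDl // mulNr actNl // act_mul //.
have [_ -> _] := act_gen (act (T y) 1); rewrite coefD coefN coefXM subr0.
rewrite (act_eigen_peval act_mod p (x := - h) (c := - mu)) ?coefZ ?coef1 ?mulr1 //.
by rewrite actNl // h1 scaleNr.
Qed.

Lemma transpose_root_iff Q N u1 u2 (p1 p2 : {poly C}) y1 y2 mu :
  ad_iso_V e f h (ad_span e f h (T Q)) (2 * N) ->
  ad_span e f h Q u1 -> lie h u1 = 0 -> u1 != 0 ->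
  ad_span e f h (T Q) u2 -> lie h u2 = 0 -> u2 != 0 ->
  u1 = peval p1 h + y1 * e -> u2 = peval p2 h + y2 * f ->
  (p1.[mu] = 0 <-> p2.[- mu] = 0).
Proof.
move=> isoRT Qu1 hu1 u1_neq0 Qu2 hu2 u2_neq0 u1E u2E.
have [_ _ [w [Qw w_neq0 ew hw]]] := isoRT.
have hTu1 : lie h (T u1) = 0.
  by rewrite -(transpose_lie_gen tr (@Ordinal 3 2 isT)) /= hu1 (lin0 (transpose_linear tr)).
have [k1 Tu1E] := ad_iso_V_zero_weight rel isoRT Qw w_neq0 ew hw (transpose_ad_span tr Qu1) hTu1.
have [k2 u2E'] := ad_iso_V_zero_weight rel isoRT Qw w_neq0 ew hw Qu2 hu2.
have k1_neq0 : k1 != 0.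
  apply: contraNneq u1_neq0 => k10.
  by rewrite -(transposeK tr pbw u1) Tu1E k10 scale0r (lin0 (transpose_linear tr)).
have k2_neq0 : k2 != 0 by apply: contraNneq u2_neq0 => k20; rewrite u2E' k20 scale0r.
have [psi [psiZ psi_u1 psi_Tu2]] := verma_functional mu.
have : k2 * psi u1 = k1 * psi (T u2).
  by rewrite -(transposeK tr pbw u1) Tu1E u2E' !(linZ (transpose_linear tr)) !psiZ mulrCA.
rewrite {1}u1E {1}u2E psi_u1 psi_Tu2 => E.
split => [p1_0|p2_0]; apply/eqP.
  by move: E; rewrite p1_0 mulr0 => /esym/eqP; rewrite mulf_eq0 (negPf k1_neq0).
by move: E; rewrite p2_0 mulr0 => /eqP; rewrite mulf_eq0 (negPf k2_neq0).
Qed.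

End TransposedRoots.

Theorem lemma3p5 (C : numClosedFieldType) (U : algType C) (e f h : U)
  (T : U -> U) (p : int) (q : nat) (Q u1 u2 : U) (p1 p2 : {poly C}) :
  is_U_sl2 e f h ->
  is_transpose e f h T ->
  admissible p q ->
  ad_iso_V e f h (ad_span e f h Q) (2 * admN p q) ->
  ad_iso_V e f h (ad_span e f h (T Q)) (2 * admN p q) ->
  ad_span e f h Q u1 -> zero_weight h u1 -> u1 != 0 ->
  ad_span e f h (T Q) u2 -> zero_weight h u2 -> u2 != 0 ->
  (exists y : U, u1 = peval p1 h + y * e) ->
  (exists y : U, u2 = peval p2 h + y * f) ->
  forall mu : C,
    (Vmu_annihilated_by e h Q mu <-> p1.[mu] = 0) /\
    (p1.[mu] = 0 <-> p2.[- mu] = 0).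
Proof.
(* Admissibility of [k] only serves to establish [R ~ V(2N omega)], which is assumed here. *)
move=> [rel pbw] tr _ isoR isoRT Qu1 hu1 u1_neq0 Qu2 hu2 u2_neq0 [y1 u1E] [y2 u2E] mu.
split; last exact: (transpose_root_iff rel pbw tr mu isoRT Qu1 hu1 u1_neq0 Qu2 hu2 u2_neq0
  u1E u2E).
have [_ _ [w [Qw w_neq0 ew hw]]] := isoR.
have [k u1k] := ad_iso_V_zero_weight rel isoR Qw w_neq0 ew hw Qu1 hu1.
have k_neq0 : k != 0 by apply: contraNneq u1_neq0 => k0; rewrite u1k k0 scale0r.
split => [ann|p1_0]; first exact: (annihilated_root rel pbw ann Qu1 u1E).
exact: (root_annihilated rel pbw isoR Qw w_neq0 ew hw u1k k_neq0 u1E p1_0).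
Qed.
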